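(* The set Ghost World $\mathrm{GW}$ of bipartite correlations is closed under wirings: for any finite collection of boxes $P_1,\dots,P_n\in\mathrm{GW}$ and any pair of wirings $\mathcal{W}_A,\mathcal{W}_B$, the wired box $\mathcal{W}_A\otimes\mathcal{W}_B(\otimes_{i=1}^nP_i)$ belongs to $\mathrm{GW}$.
   Context: A bipartite box is a conditional distribution $P(a,b|x,y)$ with finite input alphabets $\mathcal{X},\mathcal{Y}$ and finite output alphabets $\mathcal{A},\mathcal{B}$; tripartite boxes $P(a_1,a_2,a_3|x_1,x_2,x_3)$ are defined analogously. A multipartite box is no-signalling if, for every party, summing over that party's output gives a result independent of that party's input. Ghost World: a bipartite box $P(a,b|x,y)$ belongs to $\mathrm{GW}$ iff there exist no-signalling tripartite boxes $P_A(a,a',b|x,x',y)$ (with $a,a'\in\mathcal{A}$, $x,x'\in\mathcal{X}$) and $P_B(a,b,b'|x,y,y')$ (with $b,b'\in\mathcal{B}$, $y,y'\in\mathcal{Y}$) such that (1) $P_A$ is invariant under exchanging its first two parties, i.e. $P_A(a,a',b|x,x',y)=P_A(a',a,b|x',x,y)$, and $P_B$ is invariant under exchanging its last two parties, i.e. $P_B(a,b,b'|x,y,y')=P_B(a,b',b|x,y',y)$; (2) $P(a,b|x,y)=\sum_{a'}P_A(a,a',b|x,x',y)=\sum_{b'}P_B(a,b,b'|x,y,y')$ for all $x',y'$. ($\mathrm{GW}$ is considered in every bipartite Bell scenario.) Wirings: given $n$ bipartite boxes $P_1,\dots,P_n$ (each in some bipartite Bell scenario), with Alice holding the first side of each and Bob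 the second, and a target scenario $(\mathcal{X}',\mathcal{Y}',\mathcal{A}',\mathcal{B}')$, a (deterministic) wiring $\mathcal{W}_A$ for Alice is a procedure that, on effective input $x'\in\mathcal{X}'$, sequentially chooses a not-yet-used box $i$ and an input for Alice's side of that box and receives the output, where each choice is a function of $x'$ and all previous boxes, inputs and outputs; finally it outputs $a'\in\mathcal{A}'$ as a function of $x'$ and the full history. Bob's wiring $\mathcal{W}_B$ is analogous. Using the boxes independently this defines the box $\mathcal{W}_A\otimes\mathcal{W}_B(\otimes_{i=1}^nP_i)(a',b'|x',y')$. *)

From HB Require Import structures.
From mathcomp Require Import all_boot all_order all_algebra.
Set Implicit Arguments. Unset Strict Implicit. Unset Printing Implicit Defensive.
Import Order.TTheory GRing.Theory Num.Theory.
Local Open Scope ring_scope.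

Section Boxes.
Variable R : realFieldType.

(* A bipartite box P(a,b|x,y) is written  P a b x y. *)
Definition box2 (A B X Y : finType) (P : A -> B -> X -> Y -> R) : Prop :=
  (forall a b x y, 0 <= P a b x y) /\
  (forall x y, \sum_(a : A) \sum_(b : B) P a b x y = 1).

Definition box3 (A1 A2 A3 X1 X2 X3 : finType)
  (P : A1 -> A2 -> A3 -> X1 -> X2 -> X3 -> R) : Prop :=
  (forall a1 a2 a3 x1 x2 x3, 0 <= P a1 a2 a3 x1 x2 x3) /\
  (forall x1 x2 x3,
     \sum_(a1 : A1) \sum_(a2 : A2) \sum_(a3 : A3) P a1 a2 a3 x1 x2 x3 = 1).

Definition nosig3 (A1 A2 A3 X1 X2 X3 : finType)
  (P : A1 -> A2 -> A3 -> X1 -> X2 -> X3 -> R) : Prop :=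
  (forall a2 a3 x1 x1' x2 x3,
     \sum_(a1 : A1) P a1 a2 a3 x1 x2 x3 = \sum_(a1 : A1) P a1 a2 a3 x1' x2 x3) /\
  (forall a1 a3 x1 x2 x2' x3,
     \sum_(a2 : A2) P a1 a2 a3 x1 x2 x3 = \sum_(a2 : A2) P a1 a2 a3 x1 x2' x3) /\
  (forall a1 a2 x1 x2 x3 x3',
     \sum_(a3 : A3) P a1 a2 a3 x1 x2 x3 = \sum_(a3 : A3) P a1 a2 a3 x1 x2 x3').

Definition GW (A B X Y : finType) (P : A -> B -> X -> Y -> R) : Prop :=
  exists (PA : A -> A -> B -> X -> X -> Y -> R)
         (PB : A -> B -> B -> X -> Y -> Y -> R),
    [/\ box3 PA /\ nosig3 PA,
        box3 PB /\ nosig3 PB,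
        (forall a a' b x x' y, PA a a' b x x' y = PA a' a b x' x y),
        (forall a b b' x y y', PB a b b' x y y' = PB a b' b x y' y) &
        (forall a b x y x' y',
           P a b x y = \sum_(a' : A) PA a a' b x x' y /\
           P a b x y = \sum_(b' : B) PB a b b' x y y')].
End Boxes.

(* A bipartite Bell scenario with finite (nonempty) input alphabets; the
   distinguished inputs sx0 / sy0 are only used to feed boxes that a party
   never queries (irrelevant for no-signalling boxes). *)
Record scen := Scen {
  sX : finType; sY : finType; sA : finType; sB : finType;
  sx0 : sX; sy0 : sY }.

(* Deterministic adaptive wiring for one party over n boxes, where box i has
   input alphabet I i and output alphabet O i: a decision tree that either
   stops with an effective output, or queries box i with an input and continues
   depending on the obtained output. *)
Inductive wtree (n : nat) (I O : 'I_n -> finType) (Out : Type) : Type :=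
| WLeaf of Out
| WNode (i : 'I_n) of I i & (O i -> wtree I O Out).
Arguments WLeaf {n I O Out} _.
Arguments WNode {n I O Out} i _ _.

Fixpoint wvalid n (I O : 'I_n -> finType) Out (used : seq 'I_n)
  (t : wtree I O Out) : Prop :=
  match t with
  | WLeaf _ => True
  | WNode i _ k => i \notin used /\ forall o, wvalid (i :: used) (k o)
  end.

Fixpoint wout n (I O : 'I_n -> finType) Out (t : wtree I O Out)
  (r : forall i, O i) : Out :=
  match t with
  | WLeaf o => o
  | WNode i _ k => wout (k (r i)) r
  end.

Fixpoint winputs n (I O : 'I_n -> finType) Out (t : wtree I O Out)
  (r : forall i, O i) (d : forall i, I i) : forall i, I i :=
  match t with
  | WLeaf _ => d
  | WNode i x k => @dfwith _ I (winputs (k (r i)) r d) i x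
  end.

Definition wiringA n (S : 'I_n -> scen) (X' A' : finType) :=
  X' -> wtree (fun i => sX (S i)) (fun i => sA (S i)) A'.
Definition wiringB n (S : 'I_n -> scen) (Y' B' : finType) :=
  Y' -> wtree (fun i => sY (S i)) (fun i => sB (S i)) B'.

(* The wired box W_A (x) W_B (P_1 (x) ... (x) P_n), boxes used independently:
   sum over all outputs of all boxes of the product of the box probabilities
   at the inputs actually fed by the two wirings. *)
Definition wired (R : realFieldType) n (S : 'I_n -> scen)
  (P : forall i, sA (S i) -> sB (S i) -> sX (S i) -> sY (S i) -> R)
  (X' Y' A' B' : finType) (WA : wiringA S X' A') (WB : wiringB S Y' B')
  (a' : A') (b' : B') (x' : X') (y' : Y') : R :=
  \sum_(rA : {dffun forall i : 'I_n, sA (S i)})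
  \sum_(rB : {dffun forall i : 'I_n, sB (S i)})
    if (wout (WA x') rA == a') && (wout (WB y') rB == b') then
      \prod_(i < n) P i (rA i) (rB i)
          (winputs (WA x') rA (fun j => sx0 (S j)) i)
          (winputs (WB y') rB (fun j => sy0 (S j)) i)
    else 0.

(* Choose the symmetric extensions PA_i, PB_i of the boxes P_i and let the
   parties run their wirings on them: on the PA_i both copies of Alice use W_A
   and Bob uses W_B, on the PB_i Alice uses W_A and both copies of Bob use W_B.
   The resulting tripartite boxes inherit the exchange symmetries because the two
   copies run the same wiring.  Summing out the effective output of one party
   sums out all outputs of that party's boxes, after which the inputs it fed
   them, however adaptively chosen, no longer matter by no-signalling; this gives
   both no-signalling of the wired boxes and the fact that their marginals are
   the wired bipartite box. *)

From HB Require Import structures.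
From mathcomp Require Import all_boot all_order all_algebra.
From Stdlib Require Import ClassicalEpsilon.
Set Implicit Arguments. Unset Strict Implicit. Unset Printing Implicit Defensive.
Import Order.TTheory GRing.Theory Num.Theory.
Local Open Scope ring_scope.

Section WiredSums.
Variable R : realFieldType.

Lemma sum_dffun_prod (I : finType) (O : I -> finType) (G : forall i, O i -> R) :
  \sum_(r : {dffun forall i, O i}) \prod_i G i (r i) = \prod_i \sum_(o : O i) G i o.
Proof.
rewrite (reindex (@dffun_of_fprod I O)); last exact/onW_bij/dffun_of_fprod_bij.
pose G_ i := [ffun o => G i o].
transitivity (\sum_(t : fprod O) \prod_(i in I) G_ i (t i)).
  by apply: eq_bigr => t _; apply: eq_bigr => i _; rewrite !ffunE.
rewrite big_fprod.
transitivity (\prod_i \sum_(j in tagged_with O i) untag 0 (G_ i) j).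
  by rewrite bigA_distr_big_dep.
apply: eq_bigr => i _; rewrite -(big_tag G_).
by apply: eq_bigr => o _; rewrite ffunE.
Qed.

Lemma sum_if_eq (T : finType) (v : T) (p : R) :
  \sum_(a : T) (if v == a then p else 0) = p.
Proof.
by rewrite (bigD1 v) //= eqxx big1 ?addr0 // => a; rewrite eq_sym => /negbTE ->.
Qed.

(* Induction on the tree: at a node querying box i with input x, fix the answer
   o of box i; G pins the i-th factor to the outcome o at input x and leaves the
   other boxes to the subtree k o. *)
Lemma sum_winputs_prod n (I O : 'I_n -> finType) Out
    (t : wtree I O Out) (d : forall i, I i) (F : forall i, O i -> I i -> R) :
  (forall i x x', \sum_o F i o x = \sum_o F i o x') ->
  \sum_(r : {dffun forall i, O i}) \prod_i F i (r i) (winputs t r d i)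
   = \prod_i \sum_o F i o (d i).
Proof.
elim: t F => [o|i x k IH] F hF /=; first exact: (sum_dffun_prod (fun i o => F i o (d i))).
pose G (o : O i) : forall j, O j -> I j -> R := fun j o' y =>
  if j == i then (if Tagged O o' == Tagged O o then F i o x else 0)
  else F j o' y.
have hG o j y y' : \sum_o' G o j o' y = \sum_o' G o j o' y'.
  by rewrite /G; case: (j == i) => //; exact: hF.
transitivity (\sum_(o : O i) \sum_(r : {dffun forall i, O i})
    \prod_j G o j (r j) (winputs (k o) r d j)).
  rewrite [RHS]exchange_big /=; apply: eq_bigr => r _.
  rewrite [RHS](bigD1 (r i)) //= [X in _ = _ + X]big1 ?addr0; last first.
    move=> o ne; rewrite (bigD1 i) //= /G eqxx eq_Tagged /= eq_sym (negbTE ne).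
    by rewrite mul0r.
  apply: eq_bigr => j _; rewrite /G; case: eqP => [-> | /eqP nji].
    by rewrite eqxx dfwith_in.
  by rewrite dfwith_out // eq_sym.
rewrite [LHS](eq_bigr _ (fun o _ => IH o _ (hG o))).
transitivity (\sum_(o : O i) F i o x * \prod_(j | j != i) \sum_o' F j o' (d j)).
  apply: eq_bigr => o _; rewrite (bigD1 i) //=; congr (_ * _).
    rewrite /G eqxx (bigD1 o) //= eqxx big1 ?addr0 // => o' ne.
    by rewrite eq_Tagged /= (negbTE ne).
  by apply: eq_bigr => j /negbTE ji; rewrite /G ji.
by rewrite -big_distrl /= (hF i x (d i)) [RHS](bigD1 i).
Qed.

Definition nosig2 (A B X Y : finType) (Q : A -> B -> X -> Y -> R) : Prop :=
  (forall b x x' y, \sum_(a : A) Q a b x y = \sum_(a : A) Q a b x' y) /\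
  (forall a x y y', \sum_(b : B) Q a b x y = \sum_(b : B) Q a b x y').

Variable n : nat.

Definition wired2 (I1 O1 I2 O2 : 'I_n -> finType) (X1 X2 Z1 Z2 : finType)
    (T1 : X1 -> wtree I1 O1 Z1) (T2 : X2 -> wtree I2 O2 Z2)
    (d1 : forall i, I1 i) (d2 : forall i, I2 i)
    (Q : forall i, O1 i -> O2 i -> I1 i -> I2 i -> R)
    (a1 : Z1) (a2 : Z2) (x1 : X1) (x2 : X2) : R :=
  \sum_(r1 : {dffun forall i, O1 i}) \sum_(r2 : {dffun forall i, O2 i})
    if (wout (T1 x1) r1 == a1) && (wout (T2 x2) r2 == a2) then
      \prod_i Q i (r1 i) (r2 i) (winputs (T1 x1) r1 d1 i) (winputs (T2 x2) r2 d2 i)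
    else 0.

Definition wired3 (I1 O1 I2 O2 I3 O3 : 'I_n -> finType) (X1 X2 X3 Z1 Z2 Z3 : finType)
    (T1 : X1 -> wtree I1 O1 Z1) (T2 : X2 -> wtree I2 O2 Z2) (T3 : X3 -> wtree I3 O3 Z3)
    (d1 : forall i, I1 i) (d2 : forall i, I2 i) (d3 : forall i, I3 i)
    (Q : forall i, O1 i -> O2 i -> O3 i -> I1 i -> I2 i -> I3 i -> R)
    (a1 : Z1) (a2 : Z2) (a3 : Z3) (x1 : X1) (x2 : X2) (x3 : X3) : R :=
  \sum_(r1 : {dffun forall i, O1 i}) \sum_(r2 : {dffun forall i, O2 i})
  \sum_(r3 : {dffun forall i, O3 i})
    if [&& wout (T1 x1) r1 == a1, wout (T2 x2) r2 == a2 & wout (T3 x3) r3 == a3] then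
      \prod_i Q i (r1 i) (r2 i) (r3 i) (winputs (T1 x1) r1 d1 i)
        (winputs (T2 x2) r2 d2 i) (winputs (T3 x3) r3 d3 i)
    else 0.

Lemma eq_wired2 (I1 O1 I2 O2 : 'I_n -> finType) (X1 X2 Z1 Z2 : finType)
    (T1 : X1 -> wtree I1 O1 Z1) (T2 : X2 -> wtree I2 O2 Z2) d1 d2
    (Q Q' : forall i, O1 i -> O2 i -> I1 i -> I2 i -> R) :
    (forall i a b y z, Q i a b y z = Q' i a b y z) ->
  forall a1 a2 x1 x2,
  wired2 T1 T2 d1 d2 Q a1 a2 x1 x2 = wired2 T1 T2 d1 d2 Q' a1 a2 x1 x2.
Proof.
move=> eqQ a1 a2 x1 x2; apply: eq_bigr => r1 _; apply: eq_bigr => r2 _.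
by case: ifP => // _; apply: eq_bigr => i _; apply: eqQ.
Qed.

Lemma wired2_sum1 (I1 O1 I2 O2 : 'I_n -> finType) (X1 X2 Z1 Z2 : finType)
    (T1 : X1 -> wtree I1 O1 Z1) (T2 : X2 -> wtree I2 O2 Z2) d1 d2
    (Q : forall i, O1 i -> O2 i -> I1 i -> I2 i -> R) :
    (forall i, nosig2 (Q i)) -> (forall i y z, \sum_a \sum_b Q i a b y z = 1) ->
  forall x1 x2, \sum_a1 \sum_a2 wired2 T1 T2 d1 d2 Q a1 a2 x1 x2 = 1.
Proof.
move=> nsQ sumQ x1 x2.
transitivity (\sum_(r1 : {dffun forall i, O1 i}) \sum_(r2 : {dffun forall i, O2 i})
  \prod_i Q i (r1 i) (r2 i) (winputs (T1 x1) r1 d1 i) (winputs (T2 x2) r2 d2 i)).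
  rewrite /wired2; under eq_bigr do rewrite exchange_big.
  rewrite exchange_big; apply: eq_bigr => r1 _.
  under eq_bigr do rewrite exchange_big.
  rewrite exchange_big; apply: eq_bigr => r2 _ /=.
  under eq_bigr do under eq_bigr do rewrite andbC if_and.
  by under eq_bigr do rewrite sum_if_eq; rewrite sum_if_eq.
under eq_bigr => r1 _ do rewrite (sum_winputs_prod (T2 x2) d2
  (fun i => (nsQ i).2 (r1 i) (winputs (T1 x1) r1 d1 i))).
rewrite (sum_winputs_prod (T1 x1) d1 (F := fun i o y => \sum_b Q i o b y (d2 i))).
  by apply: big1 => i _; apply: sumQ.
move=> i y y'; rewrite exchange_big [RHS]exchange_big.
by apply: eq_bigr => b _; apply: (nsQ i).1.
Qed.

Section Wired3.
Variables (I1 O1 I2 O2 I3 O3 : 'I_n -> finType) (X1 X2 X3 Z1 Z2 Z3 : finType).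
Variables (T1 : X1 -> wtree I1 O1 Z1) (T2 : X2 -> wtree I2 O2 Z2)
  (T3 : X3 -> wtree I3 O3 Z3).
Variables (d1 : forall i, I1 i) (d2 : forall i, I2 i) (d3 : forall i, I3 i).

Lemma wired3_swap12 Q Q' :
    (forall i a b c y z w, Q' i b a c z y w = Q i a b c y z w) ->
  forall a1 a2 a3 x1 x2 x3,
  wired3 T1 T2 T3 d1 d2 d3 Q a1 a2 a3 x1 x2 x3 =
  wired3 T2 T1 T3 d2 d1 d3 Q' a2 a1 a3 x2 x1 x3.
Proof.
move=> eqQ a1 a2 a3 x1 x2 x3; rewrite /wired3 exchange_big.
apply: eq_bigr => r2 _; apply: eq_bigr => r1 _; apply: eq_bigr => r3 _ /=.
by rewrite andbCA; case: ifP => // _; apply: eq_bigr => i _; rewrite eqQ.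
Qed.

Lemma wired3_swap23 Q Q' :
    (forall i a b c y z w, Q' i a c b y w z = Q i a b c y z w) ->
  forall a1 a2 a3 x1 x2 x3,
  wired3 T1 T2 T3 d1 d2 d3 Q a1 a2 a3 x1 x2 x3 =
  wired3 T1 T3 T2 d1 d3 d2 Q' a1 a3 a2 x1 x3 x2.
Proof.
move=> eqQ a1 a2 a3 x1 x2 x3; rewrite /wired3.
apply: eq_bigr => r1 _; rewrite exchange_big.
apply: eq_bigr => r2 _; apply: eq_bigr => r3 _ /=.
rewrite [in RHS](andbC (_ == a3)); case: ifP => // _.
by apply: eq_bigr => i _; rewrite eqQ.
Qed.

Lemma wired3_marginal1 Q :
    (forall i a2 a3 x1 x1' x2 x3,
       \sum_a1 Q i a1 a2 a3 x1 x2 x3 = \sum_a1 Q i a1 a2 a3 x1' x2 x3) ->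
  forall a2 a3 x1 x2 x3,
  \sum_a1 wired3 T1 T2 T3 d1 d2 d3 Q a1 a2 a3 x1 x2 x3 =
  wired2 T2 T3 d2 d3 (fun i b c z w => \sum_o Q i o b c (d1 i) z w) a2 a3 x2 x3.
Proof.
move=> nsQ a2 a3 x1 x2 x3; rewrite /wired3 exchange_big /=.
under eq_bigr do rewrite exchange_big /=.
under eq_bigr do under eq_bigr do rewrite exchange_big /=.
under eq_bigr do under eq_bigr do under eq_bigr do under eq_bigr do rewrite if_and.
under eq_bigr do under eq_bigr do under eq_bigr do rewrite sum_if_eq.
rewrite exchange_big; apply: eq_bigr => r2 _.
rewrite exchange_big; apply: eq_bigr => r3 _ /=.
case: ifP => _; last by rewrite big1.
exact: (sum_winputs_prod (T1 x1) d1
  (fun i y y' => nsQ i (r2 i) (r3 i) y y'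
                   (winputs (T2 x2) r2 d2 i) (winputs (T3 x3) r3 d3 i))).
Qed.

End Wired3.

(* The marginals of the second and third parties are reduced to the first one by
   permuting the parties, which needs the lemmas above at permuted types. *)
Section Wired3Marginals.
Variables (I1 O1 I2 O2 I3 O3 : 'I_n -> finType) (X1 X2 X3 Z1 Z2 Z3 : finType).
Variables (T1 : X1 -> wtree I1 O1 Z1) (T2 : X2 -> wtree I2 O2 Z2)
  (T3 : X3 -> wtree I3 O3 Z3).
Variables (d1 : forall i, I1 i) (d2 : forall i, I2 i) (d3 : forall i, I3 i).

Lemma wired3_marginal2 Q :
    (forall i a1 a3 x1 x2 x2' x3,
       \sum_a2 Q i a1 a2 a3 x1 x2 x3 = \sum_a2 Q i a1 a2 a3 x1 x2' x3) ->
  forall a1 a3 x1 x2 x3,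
  \sum_a2 wired3 T1 T2 T3 d1 d2 d3 Q a1 a2 a3 x1 x2 x3 =
  wired2 T1 T3 d1 d3 (fun i a c y w => \sum_o Q i a o c y (d2 i) w) a1 a3 x1 x3.
Proof.
move=> nsQ a1 a3 x1 x2 x3.
under eq_bigr do rewrite (wired3_swap12 T1 T2 T3 d1 d2 d3
  (Q' := fun i b a c z y w => Q i a b c y z w)) //.
exact: wired3_marginal1 T2 T1 T3 d2 d1 d3 _
  (fun i b c y y' z w => nsQ i b c z y y' w) _ _ _ _ _.
Qed.

Lemma wired3_marginal3 Q :
    (forall i a1 a2 x1 x2 x3 x3',
       \sum_a3 Q i a1 a2 a3 x1 x2 x3 = \sum_a3 Q i a1 a2 a3 x1 x2 x3') ->
  forall a1 a2 x1 x2 x3,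
  \sum_a3 wired3 T1 T2 T3 d1 d2 d3 Q a1 a2 a3 x1 x2 x3 =
  wired2 T1 T2 d1 d2 (fun i a b y z => \sum_o Q i a b o y z (d3 i)) a1 a2 x1 x2.
Proof.
move=> nsQ a1 a2 x1 x2 x3.
under eq_bigr do rewrite (wired3_swap23 T1 T2 T3 d1 d2 d3
  (Q' := fun i a c b y w z => Q i a b c y z w)) // (wired3_swap12 T1 T3 T2 d1 d3 d2
  (Q' := fun i c a b w y z => Q i a b c y z w)) //.
exact: wired3_marginal1 T3 T1 T2 d3 d1 d2 _
  (fun i a b w w' y z => nsQ i a b y z w w') _ _ _ _ _.
Qed.

Lemma wired3_box3_nosig3 Q :
    (forall i, box3 (Q i) /\ nosig3 (Q i)) ->
  box3 (wired3 T1 T2 T3 d1 d2 d3 Q) /\ nosig3 (wired3 T1 T2 T3 d1 d2 d3 Q).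
Proof.
move=> hQ.
have ns1 i := (hQ i).2.1; have ns2 i := (hQ i).2.2.1; have ns3 i := (hQ i).2.2.2.
split; first split.
- move=> a1 a2 a3 x1 x2 x3; apply: sumr_ge0 => r1 _; apply: sumr_ge0 => r2 _.
  apply: sumr_ge0 => r3 _; case: ifP => // _.
  by apply: prodr_ge0 => i _; apply: (hQ i).1.1.
- move=> x1 x2 x3.
  under eq_bigr do under eq_bigr do rewrite wired3_marginal3 //.
  apply: wired2_sum1 => [i|i y z]; last exact: (hQ i).1.2.
  split=> [b y y' z | a y z z']; rewrite exchange_big [RHS]exchange_big;
    apply: eq_bigr => o _; [exact: ns1 | exact: ns2].
split; [|split] => *.
- by rewrite !wired3_marginal1.
- by rewrite !wired3_marginal2.
- by rewrite !wired3_marginal3.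
Qed.

End Wired3Marginals.

End WiredSums.

Lemma dependent_choice_fun (I : Type) (T : I -> Type) (Pr : forall i, T i -> Prop) :
  (forall i, exists t, Pr i t) -> exists f : forall i, T i, forall i, Pr i (f i).
Proof.
move=> h; exists (fun i => proj1_sig (constructive_indefinite_description _ (h i))).
by move=> i; exact: proj2_sig (constructive_indefinite_description _ (h i)).
Qed.

Theorem theorem2 (R : realFieldType) (n : nat) (S : 'I_n -> scen)
  (P : forall i, sA (S i) -> sB (S i) -> sX (S i) -> sY (S i) -> R)
  (HP : forall i, GW (P i))
  (X' Y' A' B' : finType) (WA : wiringA S X' A') (WB : wiringB S Y' B')
  (HWA : forall x', wvalid [::] (WA x'))
  (HWB : forall y', wvalid [::] (WB y')) :
  GW (wired P WA WB).
Proof.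
have [PA /dependent_choice_fun [PB hP]] := dependent_choice_fun HP.
pose dA j := sx0 (S j); pose dB j := sy0 (S j).
have PA_ok i : box3 (PA i) /\ nosig3 (PA i) by case: (hP i).
have PB_ok i : box3 (PB i) /\ nosig3 (PB i) by case: (hP i).
have P_PA i a b x y : P i a b x y = \sum_a' PA i a a' b x (dA i) y.
  by case: (hP i) => _ _ _ _ /(_ a b x y (dA i) (dB i)) [].
have P_PB i a b x y : P i a b x y = \sum_b' PB i a b b' x y (dB i).
  by case: (hP i) => _ _ _ _ /(_ a b x y (dA i) (dB i)) [].
exists (wired3 WA WA WB dA dA dB PA), (wired3 WA WB WB dA dB dB PB).
split; [exact: wired3_box3_nosig3 | exact: wired3_box3_nosig3 | | | ].
- by move=> *; apply: wired3_swap12 => i *; case: (hP i).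
- by move=> *; apply: wired3_swap23 => i *; case: (hP i).
move=> a b x y x' y'; split.
- rewrite wired3_marginal2; first exact: (eq_wired2 _ _ _ _ P_PA).
  by move=> i; case: (PA_ok i) => _ [_ []].
- rewrite wired3_marginal3; first exact: (eq_wired2 _ _ _ _ P_PB).
  by move=> i; case: (PB_ok i) => _ [_ []].
Qed.
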